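(* For integers $0\le k\le n-1$ and $\lambda\in\mathbb C$, \[ d^k_n(\lambda)=n\,d^k_{n-1}(\lambda)+(\lambda-1)\,d^{k-1}_{n-2}(\lambda), \] where for $k=0$ the convention $d^{-1}_m(\lambda)=(\lambda-1)^{m+1}$ (for $m\ge -1$) is used.
   Context: For $\lambda\in\mathbb C$ and integers $0\le k\le n$, define $e^k_n(\lambda)$ by $e^n_n(\lambda)=n!$ and, for $1\le k\le n$, $e^{k-1}_n(\lambda)=e^k_n(\lambda)+(\lambda-1)e^{k-1}_{n-1}(\lambda)$. Put $d^k_n(\lambda)=e^k_n(\lambda)/k!$. (For nonnegative integer $\lambda$, $d^k_n(\lambda)$ counts permutations of $[n]$ whose first $k$ entries are decreasing, where each fixed point among the last $n-k$ positions is given one of $\lambda$ colours.) *)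

(* The complex numbers are modelled as [complex R] = R[i]
   for an arbitrary [R : realType] (mathcomp-real-closed's complex). *)
From mathcomp Require Import all_boot all_order all_algebra.
From mathcomp Require Import reals zify.
From mathcomp Require Export complex.
Set Implicit Arguments. Unset Strict Implicit. Unset Printing Implicit Defensive.
Import Order.TTheory GRing.Theory Num.Theory.
Local Open Scope ring_scope.

(* ecol l n k = e^k_n(l) for 0 <= k <= n, computed by the defining recursion
   e^n_n = n!,  e^{k-1}_n = e^k_n + (l-1) e^{k-1}_{n-1}.
   For fixed n, the inner fixpoint g j computes e^{n-j}_n.
   Values for k > n are junk (never used). *)
Fixpoint ecol (C : nzRingType) (l : C) (n : nat) : nat -> C :=
  match n with
  | 0 => fun _ => 1
  | n'.+1 =>
      let p := ecol l n' in
      fun k =>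
        (fix g (j : nat) : C :=
           match j with
           | 0 => (n'.+1)`!%:R
           | j'.+1 => g j' + (l - 1) * p (n'.+1 - j'.+1)%N
           end) (n'.+1 - k)%N
  end.

Definition e_ (C : nzRingType) (l : C) (k n : nat) : C := ecol l n k.

Definition d_ (C : fieldType) (l : C) (k n : nat) : C := e_ l k n / (k`!)%:R.

Lemma e_nn (C : nzRingType) (l : C) n : e_ l n n = (n`!)%:R.
Proof. by case: n => [|n] //=; rewrite /e_ /= subnn. Qed.

Lemma e_rec (C : nzRingType) (l : C) n k : (1 <= k <= n)%N ->
  e_ l k.-1 n = e_ l k n + (l - 1) * e_ l k.-1 n.-1.
Proof.
case: n => [|n] /andP [k1 kn]; first by case: k k1 kn.
rewrite /e_ /=.
have -> : (n.+1 - k.-1 = (n.+1 - k).+1)%N by case: k k1 kn => // k _ kn /=; rewrite subSn.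
have -> : (n.+1 - (n.+1 - k).+1 = k.-1)%N by lia.
by [].
Qed.

From mathcomp Require Import all_boot all_order all_algebra.
From mathcomp Require Import reals complex.
From mathcomp Require Import ring zify.
Set Implicit Arguments. Unset Strict Implicit. Unset Printing Implicit Defensive.
Import GRing.Theory Num.Theory.
Local Open Scope ring_scope.

(* With T^0_n := (l-1)^n and T^k_n := k e^{k-1}_{n-1} for k > 0 (so that
   T^k_n / k! = d^{k-1}_{n-1} under the stated convention), one shows
   e^k_{n+1} = (n+1) e^k_n + (l-1) T^k_n for k <= n, by induction on n and,
   for fixed n, downwards in k from the diagonal k = n.  In the step, the
   defining recursion at levels n+2 and n+1 and the companion recursion
   T^k_{n+1} = k e^k_n + (l-1) T^k_n reduce everything to the induction
   hypothesis at level n.  Dividing by k! gives the theorem. *)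

Lemma downward_ind (P : nat -> Prop) (n : nat) :
  P n -> (forall k, (k < n)%N -> P k.+1 -> P k) ->
  forall k, (k <= n)%N -> P k.
Proof.
move=> Pn IH k kn; rewrite -(subKn kn).
elim: (n - k)%N (leq_subr k n) => [|j IHj] jn; first by rewrite subn0.
by apply: IH; [lia | rewrite -subSn //; apply: IHj; lia].
Qed.

Section ColumnRecursion.

Variables (C : comNzRingType) (l : C).

Lemma e_recl n k : (k <= n)%N ->
  e_ l k n.+1 = e_ l k.+1 n.+1 + (l - 1) * e_ l k n.
Proof. by move=> kn; apply: (@e_rec _ l n.+1 k.+1); lia. Qed.

Definition e_tail k n : C :=
  match k with 0 => (l - 1) ^+ n | k'.+1 => k%:R * e_ l k' n.-1 end.

Lemma e_tail_diag n : e_tail n n = n`!%:R.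
Proof. by case: n => [|n] //=; rewrite e_nn factS natrM. Qed.

Lemma e_tail_rec n k : (k <= n)%N ->
  e_tail k n.+1 = k%:R * e_ l k n + (l - 1) * e_tail k n.
Proof.
case: k => [|k] kn; first by rewrite mul0r add0r /e_tail exprS.
by case: n kn => // n kn; rewrite /e_tail !succnK (e_recl (ltnSE kn)); ring.
Qed.

Lemma e_diag_succ n : e_ l n n.+1 = n.+1%:R * e_ l n n + (l - 1) * e_tail n n.
Proof. by rewrite e_recl // !e_nn e_tail_diag factS natrM. Qed.

Lemma e_succ n k : (k <= n)%N ->
  e_ l k n.+1 = n.+1%:R * e_ l k n + (l - 1) * e_tail k n.
Proof.
elim: n k => [|n IHn]; apply: downward_ind => [|k kn step]; try exact: e_diag_succ.
  by [].
have e_next : e_ l k.+1 n.+1 =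
    n.+1%:R * e_ l k n + (l - 1) * e_tail k n - (l - 1) * e_ l k n.
  by rewrite -IHn ?(e_recl (ltnSE kn)) ?addrK.
rewrite (e_recl (ltnW kn)) step (e_tail_rec (ltnSE kn)) e_next (IHn k (ltnSE kn)).
by rewrite [e_tail k.+1 _]/e_tail succnK; ring.
Qed.

End ColumnRecursion.

Theorem mainTheorem5 (R : realType) (l : complex R) (n k : nat) :
  (k <= n.-1)%N -> (0 < n)%N ->
  d_ l k n =
    n%:R * d_ l k n.-1
    + (l - 1) * (match k with
                 | 0 => (l - 1) ^+ n.-1
                 | k'.+1 => d_ l k' n.-2
                 end).
Proof.
case: n => // n /= kn _.
rewrite /d_ (e_succ l kn).
case: k kn => [|k] kn /=; first by rewrite fact0 !divr1.
have k_fact_neq0 : (k`!%:R : complex R) != 0 by rewrite pnatr_eq0 -lt0n fact_gt0.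
rewrite factS natrM invfM; field.
by rewrite k_fact_neq0 -mulrS pnatr_eq0.
Qed.
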